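(* Let $A$ be a hyperoperator on $\mathbb{R}^n$ on the complex Banach space $X$ and let $f\in\mathcal{E}(\mathbb{R}^n)$ be real-valued. Assume that $b=f(a)$ is bounded, i.e. extends to a bounded operator $\bar b$ on $X$. Then $f(\sigma(A))\subset\sigma(\bar b)$, where $\sigma(\bar b)$ is the spectrum of the bounded operator $\bar b$.
   Context: $X$ is a complex Banach space, $L(X)$ the bounded operators. $\mathcal{D}(\mathbb{R}^n)=C_c^\infty(\mathbb{R}^n)$, $\mathcal{E}(\mathbb{R}^n)=C^\infty(\mathbb{R}^n)$. A hyperoperator on $\mathbb{R}^n$ is a linear map $A:\mathcal{D}(\mathbb{R}^n)\to L(X)$, continuous ($A(\phi_j)\to0$ in operator norm when $\phi_j\to0$ in $\mathcal{D}(\mathbb{R}^n)$), multiplicative, with (i) $D_A:=\bigcup_\phi\operatorname{Im}A(\phi)$ dense and (ii) $\bigcap_\phi\operatorname{Ker}A(\phi)=\{0\}$. For smooth real-valued $f$ and $x\in D_A$ written $x=A(\phi)y$, $f(a)x:=A(f\phi)y$ (well defined). $\sigma(A)$ is the support of $A$ as an $L(X)$-valued distribution. *)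

From HB Require Import structures.
From mathcomp Require Import all_boot all_order all_algebra.
From mathcomp Require Import all_classical all_reals all_analysis.
From mathcomp Require Import complex.
Import Order.TTheory GRing.Theory Num.Theory.
Import numFieldNormedType.Exports.

Set Implicit Arguments.
Unset Strict Implicit.
Unset Printing Implicit Defensive.

Local Open Scope classical_set_scope.
Local Open Scope ring_scope.

Section Hyper.
Variables (R : realType) (n : nat).

Definition partial (i : 'I_n) (g : 'rV[R]_n -> R) : 'rV[R]_n -> R :=
  fun x => 'D_(delta_mx 0 i) g x.

Definition dpart (s : seq 'I_n) (g : 'rV[R]_n -> R) : 'rV[R]_n -> R :=
  foldr partial g s.

Definition smooth (g : 'rV[R]_n -> R) : Prop :=
  forall s : seq 'I_n, continuous (dpart s g) /\
    forall (i : 'I_n) (x : 'rV[R]_n), derivable (dpart s g) x (delta_mx 0 i).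

Definition reP (phi : 'rV[R]_n -> R[i]) : 'rV[R]_n -> R :=
  fun x => complex.Re (phi x).
Definition imP (phi : 'rV[R]_n -> R[i]) : 'rV[R]_n -> R :=
  fun x => complex.Im (phi x).

Definition smoothC (phi : 'rV[R]_n -> R[i]) : Prop :=
  smooth (reP phi) /\ smooth (imP phi).

Definition fsupport (phi : 'rV[R]_n -> R[i]) : set 'rV[R]_n :=
  closure [set x | phi x != 0].

Definition test_fun (phi : 'rV[R]_n -> R[i]) : Prop :=
  smoothC phi /\ compact (fsupport phi).

Definition D_cvg0 (u : nat -> 'rV[R]_n -> R[i]) : Prop :=
  (forall j, test_fun (u j)) /\
  exists K : set 'rV[R]_n, compact K /\ (forall j, fsupport (u j) `<=` K) /\
    forall (s : seq 'I_n) (eps : R), 0 < eps ->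
      \forall j \near \oo, forall x : 'rV[R]_n,
        `|dpart s (reP (u j)) x| <= eps /\ `|dpart s (imP (u j)) x| <= eps.

Variable X : completeNormedModType R[i].

Definition bounded_op (T : X -> X) : Prop :=
  (forall (a : R[i]) (x y : X), T (a *: x + y) = a *: T x + T y) /\
  continuous T.

Definition hyperoperator (A : ('rV[R]_n -> R[i]) -> X -> X) : Prop :=
  (forall phi, test_fun phi -> bounded_op (A phi)) /\
  (forall (a : R[i]) phi psi, test_fun phi -> test_fun psi ->
     A (fun x => a * phi x + psi x) = (fun y => a *: A phi y + A psi y)) /\
  (forall u, D_cvg0 u -> forall eps : R, 0 < eps ->
     \forall j \near \oo, forall y : X, `|A (u j) y| <= (eps%:C)%C * `|y|) /\
  (forall phi psi, test_fun phi -> test_fun psi ->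
     A (fun x => phi x * psi x) = (A phi \o A psi)) /\
  closure (\bigcup_(phi in test_fun) range (A phi)) = setT /\
  (forall y : X, (forall phi, test_fun phi -> A phi y = 0) -> y = 0).

(* sigma(A): the support of A as an L(X)-valued distribution *)
Definition hsupport (A : ('rV[R]_n -> R[i]) -> X -> X) : set 'rV[R]_n :=
  [set x | forall U : set 'rV[R]_n, open U -> U x ->
     exists phi, [/\ test_fun phi, fsupport phi `<=` U & exists y, A phi y != 0]].

Definition spectrum (T : X -> X) : set R[i] :=
  [set l | ~ exists S : X -> X, [/\ bounded_op S,
      (forall y, S (T y - l *: y) = y) &
      (forall y, T (S y) - l *: S y = y)]].

End Hyper.

(* Suppose [S] is a bounded inverse of [bbar - f x0] with [|S z| <= C |z|], and
   put [h := C (f - f x0)].  The intertwining relation [bbar A(phi) = A(f phi)]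
   gives [A(phi) = S A((f - f x0) phi)], hence [|A(phi) y| <= |A(h^m phi) y|]
   for every [m].  As [x0] lies in the support of [A], some [phi] supported in
   [{|h| < 1/e}] has [A(phi) y <> 0]; but there [h^m phi -> 0] in [D(R^n)], and
   the continuity of [A] forces [A(phi) y = 0]. *)

From HB Require Import structures.
From mathcomp Require Import all_boot all_order all_algebra.
From mathcomp Require Import all_classical all_reals all_analysis.
From mathcomp Require Import complex.
From mathcomp Require Import zify ring lra.
Import Order.TTheory GRing.Theory Num.Theory.
Import numFieldNormedType.Exports.

Set Implicit Arguments.
Unset Strict Implicit.
Unset Printing Implicit Defensive.

Local Open Scope classical_set_scope.
Local Open Scope ring_scope.

Section SmoothFunctions.
Variables (R : realType) (n : nat).
Local Notation V := 'rV[R]_n.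
Local Notation e i := (delta_mx 0 i : V).
Implicit Types (F G : V -> R) (s : seq 'I_n).

Lemma dpart_rcons s i F : dpart (rcons s i) F = dpart s (partial i F).
Proof. by rewrite /dpart foldr_rcons. Qed.

Definition smooth_upto k F := forall s, (size s <= k)%N ->
  continuous (dpart s F) /\ forall i x, derivable (dpart s F) x (e i).

Lemma smoothP F : smooth F <-> forall k, smooth_upto k F.
Proof.
split=> [sF k s _|sF s]; first exact: sF.
exact: (sF (size s) s (leqnn _)).
Qed.

Lemma smooth_continuous F : smooth F -> continuous F.
Proof. by move=> sF; exact: (sF [::]).1. Qed.

Lemma smooth_derivable F i x : smooth F -> derivable F x (e i).
Proof. by move=> sF; exact: (sF [::]).2. Qed.

Lemma smooth_partial F i : smooth F -> smooth (partial i F).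
Proof. by move=> sF s; rewrite -dpart_rcons; exact: sF. Qed.

Lemma dpartD k F G s : smooth_upto k F -> smooth_upto k G -> (size s <= k.+1)%N ->
  dpart s (fun y => F y + G y) = (fun y => dpart s F y + dpart s G y).
Proof.
move=> sF sG; elim: s => [|i s IH] //= ss.
rewrite /partial IH ?(ltnW ss) //; apply/funext => x.
by apply: deriveD; [exact: (sF s ss).2 | exact: (sG s ss).2].
Qed.

Lemma smooth_uptoD k F G : smooth_upto k F -> smooth_upto k G ->
  smooth_upto k (fun y => F y + G y).
Proof.
move=> sF sG s ss; rewrite (dpartD sF sG) ?(leqW ss) //.
have [cF dF] := sF s ss; have [cG dG] := sG s ss.
split=> [x|i x]; first exact: (continuousD (cF x) (cG x)).
exact: derivableD.
Qed.

Lemma smoothD F G : smooth F -> smooth G -> smooth (fun y => F y + G y).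
Proof.
by move=> /smoothP sF /smoothP sG; apply/smoothP => k; exact: smooth_uptoD.
Qed.

Lemma partialM F G i : smooth F -> smooth G ->
  partial i (fun y => F y * G y) =
  (fun y => partial i F y * G y + F y * partial i G y).
Proof.
move=> sF sG; apply/funext => x.
rewrite /partial deriveM; last 2 first; [exact: smooth_derivable..|].
by rewrite addrC; congr (_ + _); exact: mulrC.
Qed.

(* The induction on the order ranges over all pairs of smooth factors, since
   Leibniz's rule turns [F * G] into [partial F * G + F * partial G]. *)
Lemma smooth_uptoM k F G : smooth F -> smooth G -> smooth_upto k (fun y => F y * G y).
Proof.
elim: k F G => [|k IH] F G sF sG s ss.
  case: s ss => // _; split=> [x|i x] /=; last by apply: derivableM; exact: smooth_derivable.
  by apply: continuousM; [exact: (smooth_continuous sF) | exact: (smooth_continuous sG)].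
case/lastP: s ss => [|s i] ss; first exact: IH.
rewrite size_rcons ltnS in ss; rewrite dpart_rcons partialM //.
exact: (smooth_uptoD (IH _ _ (smooth_partial i sF) sG) (IH _ _ sF (smooth_partial i sG)) ss).
Qed.

Lemma smoothM F G : smooth F -> smooth G -> smooth (fun y => F y * G y).
Proof. by move=> sF sG; apply/smoothP => k; exact: smooth_uptoM. Qed.

Lemma smooth_cst (c : R) : smooth (fun _ : V => c).
Proof.
suff dpart_cst s : dpart s (fun _ : V => c) = fun _ => if s is [::] then c else 0.
  by move=> s; rewrite dpart_cst; split=> [x|i x]; [exact: cst_continuous | exact: derivable_cst].
elim: s => [|i s IH] //=; rewrite IH /partial; apply/funext => x.
by case: s {IH} => *; exact: derive_cst.
Qed.

Lemma smoothX F k : smooth F -> smooth (fun y => F y ^+ k).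
Proof.
move=> sF; elim: k => [|k IH]; first by under eq_fun do rewrite expr0; exact: smooth_cst.
by under eq_fun do rewrite exprS; exact: smoothM.
Qed.

Lemma partial_eq0_open F (O : set V) i : open O -> (forall y, O y -> F y = 0) ->
  forall y, O y -> partial i F y = 0.
Proof.
move=> oO F0 y Oy; rewrite /partial (@near_eq_derive _ _ _ F (fun _ => 0)).
  exact: derive_cst.
by near=> z; apply: F0; near: z; exact: open_nbhs_nbhs.
Unshelve. all: by end_near. Qed.

End SmoothFunctions.

Lemma poly_expRN1_small (R : realType) (p d : nat) (M eps : R) : 0 < eps -> 0 <= M ->
  \forall m \near \oo, m.+1%:R ^+ p * expR (-1) ^+ (m - d) * M <= eps.
Proof.
move=> e0 M0; pose c : R := d.+2%:R ^+ p * p.+1`!%:R * M.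
near=> m.
have dm : (d < m)%N by near: m; exact: nbhs_infty_gt.
have mc : c / eps + d%:R <= m%:R by near: m; exact: nbhs_infty_ger.
set k := (m - d)%N.
have k0 : (0 : R) < k%:R by rewrite ltr0n subn_gt0.
have kp0 : (0 : R) < k%:R ^+ p.+1 by rewrite exprn_gt0.
have f0 : (0 : R) < p.+1`!%:R by rewrite ltr0n fact_gt0.
have mk : m.+1%:R ^+ p <= d.+2%:R ^+ p * k%:R ^+ p :> R.
  rewrite -exprMn -natrM; apply: lerXn2r; rewrite ?nnegrE ?ler0n // ler_nat /k; nia.
have ek : (expR k%:R)^-1 <= p.+1`!%:R / k%:R ^+ p.+1 :> R.
  rewrite -invf_div lef_pV2 ?posrE ?expR_gt0 ?divr_gt0 //.
  by apply: le_trans (expR_ge1Dxn p (ler0n R k)); rewrite lerDr.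
rewrite -expRM_natl mulrN1 expRN.
apply: (@le_trans _ _ (d.+2%:R ^+ p * k%:R ^+ p * (p.+1`!%:R / k%:R ^+ p.+1) * M)).
  by apply: ler_wpM2r => //; apply: ler_pM; rewrite ?exprn_ge0 ?invr_ge0 ?expR_ge0.
have -> : d.+2%:R ^+ p * k%:R ^+ p * (p.+1`!%:R / k%:R ^+ p.+1) * M = c / k%:R.
  by rewrite /c exprS; field; rewrite !gt_eqF // exprn_gt0.
rewrite ler_pdivrMr // mulrC -ler_pdivrMr // natrB 1?ltnW //.
by rewrite lerBrDr.
Unshelve. all: by end_near. Qed.

Lemma compact_norm_bounded (T : topologicalType) (R : realType) (K : set T) (W : T -> R) :
  compact K -> continuous W -> exists2 M, 0 < M & forall y, K y -> `|W y| <= M.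
Proof.
move=> cK cW.
have /pinfty_ex_gt0[M M0 KM] := compact_bounded (continuous_compact (continuous_subspaceT cW) cK).
by exists M => // y Ky; apply: KM; exists y.
Qed.

Section DerivativeDecay.
Variables (R : realType) (n : nat) (h : 'rV[R]_n -> R) (K : set 'rV[R]_n).
Hypotheses (sh : smooth h) (cK : compact K) (clK : closed K)
  (hK : forall y, K y -> `|h y| <= expR (-1)).
Implicit Types (W : 'rV[R]_n -> R).

Lemma smooth_coef_pow_mul (c : R) k W : smooth W -> smooth (fun y => c * (h y ^+ k * W y)).
Proof. by move=> sW; exact: smoothM (smooth_cst _) (smoothM (smoothX k sh) sW). Qed.

Lemma partial_coef_pow_mul (c : R) k W i : smooth W ->
  partial i (fun y => c * (h y ^+ k * W y)) =
  (fun y => (c * k%:R) * (h y ^+ k.-1 * (partial i h y * W y)) + c * (h y ^+ k * partial i W y)).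
Proof.
move=> sW; apply/funext => y.
have dh : derivable h y (delta_mx 0 i) := smooth_derivable sh.
have dW : derivable W y (delta_mx 0 i) := smooth_derivable sW.
have dhk : derivable (fun y => h y ^+ k) y (delta_mx 0 i).
  by rewrite -exprfctE; exact: derivableX.
rewrite /partial deriveM; [|exact: derivable_cst|exact: derivableM].
rewrite derive_cst deriveM // -exprfctE deriveX //.
rewrite /GRing.scale /=; ring.
Qed.

(* The derivatives of [c m * h ^+ (m - d) * W] are sums of terms of the same shape,
   with polynomially growing coefficients, whence the decay on [K] where
   [|h| <= expR (-1)]. *)
Lemma dpart_coef_pow_mul_small s : forall (d p : nat) (c : nat -> R) W,
  (forall m, `|c m| <= m.+1%:R ^+ p) -> smooth W -> (forall y, ~ K y -> W y = 0) ->
  forall eps, 0 < eps -> \forall m \near \oo, forall x,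
    `|dpart s (fun y => c m * (h y ^+ (m - d) * W y)) x| <= eps.
Proof.
elim/last_ind: s => [|s i IH] d p c W cp sW W0 eps e0.
  have [M M0 WM] := compact_norm_bounded cK (smooth_continuous sW).
  apply: filterS (poly_expRN1_small p d e0 (ltW M0)) => m small x /=.
  have [Kx|nKx] := pselect (K x); last by rewrite W0 // !mulr0 normr0 ltW.
  apply: le_trans small; rewrite !normrM normrX -mulrA.
  apply: ler_pM; rewrite ?mulr_ge0 ?exprn_ge0 //.
  apply: ler_pM; rewrite ?exprn_ge0 // ?WM //.
  by apply: lerXn2r; rewrite ?nnegrE ?expR_ge0 // hK.
have oK : open (~` K) by exact: closed_openC.
have dW0 y : ~ K y -> partial i W y = 0.
  by move=> nKy; apply: (partial_eq0_open i oK) => // z; exact: W0.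
have e20 : 0 < eps / 2 by rewrite divr_gt0.
have cp' m : `|c m * (m - d)%:R| <= m.+1%:R ^+ p.+1.
  rewrite normrM normr_nat exprS mulrC.
  by apply: ler_pM; rewrite ?ler_nat //; lia.
have dhW0 y : ~ K y -> partial i h y * W y = 0 by move=> nKy; rewrite W0 // mulr0.
have small1 := IH d.+1 p.+1 _ _ cp' (smoothM (smooth_partial i sh) sW) dhW0 _ e20.
have small2 := IH d p c _ cp (smooth_partial i sW) dW0 _ e20.
apply: filterS2 small1 small2 => m small1 small2 x.
rewrite dpart_rcons partial_coef_pow_mul // -subnS.
rewrite (dpartD ((smoothP _).1 (smooth_coef_pow_mul _ _ (smoothM (smooth_partial i sh) sW)) (size s))
                ((smoothP _).1 (smooth_coef_pow_mul _ _ (smooth_partial i sW)) (size s))) //.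
by rewrite [eps]splitr; apply: le_trans (ler_normD _ _) (lerD (small1 x) (small2 x)).
Qed.

Lemma dpart_pow_mul_small s W : smooth W -> (forall y, ~ K y -> W y = 0) ->
  forall eps, 0 < eps -> \forall m \near \oo, forall x,
    `|dpart s (fun y => h y ^+ m * W y) x| <= eps.
Proof.
move=> sW W0 eps e0.
have c1 m : `|(1 : R)| <= m.+1%:R ^+ 0 by rewrite normr1 expr0.
apply: filterS (dpart_coef_pow_mul_small s 0 c1 sW W0 e0) => m.
by under eq_fun do rewrite subn0 mul1r.
Qed.

End DerivativeDecay.

Section TestFunctions.
Variables (R : realType) (n : nat).
Local Notation V := 'rV[R]_n.
Implicit Types (F : V -> R) (phi : V -> R[i]).

Definition rscale F phi : V -> R[i] := fun x => ((F x)%:C)%C * phi x.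

Lemma rscaleM F G phi : rscale (fun x => F x * G x) phi = rscale F (rscale G phi).
Proof. by apply/funext => x; rewrite /rscale rmorphM mulrA. Qed.

Lemma reP_rscale F phi : reP (rscale F phi) = (fun y => F y * reP phi y).
Proof. by apply/funext => y; rewrite /reP /rscale; case: (phi y) => a b /=; ring. Qed.

Lemma imP_rscale F phi : imP (rscale F phi) = (fun y => F y * imP phi y).
Proof. by apply/funext => y; rewrite /imP /rscale; case: (phi y) => a b /=; ring. Qed.

Lemma fsupport_rscale F phi : fsupport (rscale F phi) `<=` fsupport phi.
Proof. by apply: closureS => y /=; apply: contra; rewrite /rscale => /eqP ->; rewrite mulr0. Qed.

Lemma test_fun_rscale F phi : smooth F -> test_fun phi -> test_fun (rscale F phi).
Proof.
move=> sF [[sre sim] cphi]; split; first by rewrite /smoothC reP_rscale imP_rscale; split; exact: smoothM.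
by apply: (@subclosed_compact _ _ (fsupport phi)); [exact: closed_closure | | exact: fsupport_rscale].
Qed.

Lemma notin_fsupport phi y : ~ fsupport phi y -> phi y = 0.
Proof. by move=> nphi; apply/eqP/negPn/negP => phiy; apply: nphi; exact: subset_closure. Qed.

Lemma D_cvg0_rscale_pow h phi : smooth h -> test_fun phi ->
  (forall y, fsupport phi y -> `|h y| <= expR (-1)) ->
  D_cvg0 (fun m => rscale (fun x => h x ^+ m) phi).
Proof.
move=> sh tphi hK; have [[sre sim] cK] := tphi.
split=> [m|]; first exact: test_fun_rscale (smoothX m sh) tphi.
exists (fsupport phi); split=> //; split=> [m|s eps e0]; first exact: fsupport_rscale.
have re0 y : ~ fsupport phi y -> reP phi y = 0 by move=> /notin_fsupport; rewrite /reP /= => ->.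
have im0 y : ~ fsupport phi y -> imP phi y = 0 by move=> /notin_fsupport; rewrite /imP /= => ->.
have clK : closed (fsupport phi) by exact: closed_closure.
apply: filterS2 (dpart_pow_mul_small sh cK clK hK s sre re0 e0)
                (dpart_pow_mul_small sh cK clK hK s sim im0 e0) => m small_re small_im x.
by rewrite reP_rscale imP_rscale.
Qed.

End TestFunctions.

Lemma bounded_op_normP (R : realType) (X : completeNormedModType R[i]) (S : X -> X) :
  bounded_op S -> exists2 C : R, 0 < C & forall z, `|S z| <= ((C%:C)%C) * `|z|.
Proof.
move=> [Slin Scont].
pose L : {linear X -> X} := HB.pack S (GRing.isLinear.Build _ _ _ _ S Slin).
have /linear_boundedP[M [Mreal SM]] : bounded_near L (nbhs 0).
  exact/linear_bounded_continuous.
exists (`|complex.Re M| + 1); first by rewrite ltr_pwDr ?normr_ge0.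
apply: SM; rewrite -(RRe_real Mreal) ltcR.
by apply: le_lt_trans (ler_norm _) _; rewrite ltrDl.
Qed.

Lemma norm_le_scale_eq0 (R : realType) (X : normedModType R[i]) (z y : X) :
  (forall eps : R, 0 < eps -> `|z| <= ((eps%:C)%C) * `|y|) -> z = 0.
Proof.
move=> zy; have /complex_realP[a za] := normr_real z.
have /complex_realP[b yb] := normr_real y.
have a0 : 0 <= a by rewrite -ler0c -za.
have b0 : 0 <= b by rewrite -ler0c -yb.
have ab eps : 0 < eps -> a <= eps * b by move=> /zy; rewrite za yb -rmorphM lecR.
suff a_le0 : a <= 0.
  by apply/normr0_eq0; rewrite za (_ : a = 0) ?rmorph0 //; apply/eqP; rewrite eq_le a_le0 a0.
rewrite leNgt; apply/negP => a_gt0.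
have b1 : 0 < b + 1 by rewrite ltr_wpDl.
by have := ab _ (divr_gt0 a_gt0 b1); rewrite mulrAC ler_pdivlMr //; nra.
Qed.

Section Hyperoperator.
Variables (R : realType) (n : nat) (X : completeNormedModType R[i]).
Variable A : ('rV[R]_n -> R[i]) -> X -> X.
Hypothesis hA : hyperoperator A.
Implicit Types (phi : 'rV[R]_n -> R[i]) (y : X).

Lemma hyperoperatorZ (a : R[i]) phi : test_fun phi ->
  A (fun x => a * phi x) = (fun y => a *: A phi y).
Proof.
have [_ [Alin _]] := hA; move=> tphi; have := Alin (a - 1) phi phi tphi tphi.
have -> : (fun x => (a - 1) * phi x + phi x) = (fun x => a * phi x).
  by apply/funext => x; ring.
by move=> ->; apply/funext => y; rewrite scalerBl scale1r subrK.
Qed.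

Lemma hyperoperator_dominated_eq0 phi y (u : nat -> 'rV[R]_n -> R[i]) :
  D_cvg0 u -> (forall m, `|A phi y| <= `|A (u m) y|) -> A phi y = 0.
Proof.
have [_ [_ [Acont _]]] := hA; move=> /Acont Au dom.
apply: (@norm_le_scale_eq0 _ _ _ y) => eps e0.
have [N _ AuN] := Au eps e0.
exact: le_trans (dom N) (AuN N (leqnn N) y).
Qed.

Section Resolvent.
Variables (f : 'rV[R]_n -> R) (bbar S : X -> X) (x0 : 'rV[R]_n) (C : R).
Hypotheses (sf : smooth f) (C_ge0 : 0 <= C)
  (Af : forall phi y, test_fun phi -> bbar (A phi y) = A (rscale f phi) y)
  (S_resolvent : forall y, S (bbar y - ((f x0)%:C)%C *: y) = y)
  (S_le : forall z, `|S z| <= ((C%:C)%C) * `|z|).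

Let g x := f x - f x0.

Let smooth_g : smooth g. Proof. exact: smoothD sf (smooth_cst (- f x0)). Qed.

Lemma resolvent_step phi y : test_fun phi -> A phi y = S (A (rscale g phi) y).
Proof.
have [_ [Alin _]] := hA; move=> tphi.
rewrite -{1}[A phi y]S_resolvent Af //; congr S.
have -> : rscale g phi = (fun x => - ((f x0)%:C)%C * phi x + rscale f phi x).
  by apply/funext => x; rewrite /rscale /g rmorphB /=; ring.
rewrite Alin //=; last exact: test_fun_rscale sf tphi.
by rewrite addrC -scaleNr.
Qed.

Lemma resolvent_pow_le phi y m : test_fun phi ->
  `|A phi y| <= ((C%:C)%C) ^+ m * `|A (rscale (fun x => g x ^+ m) phi) y|.
Proof.
move=> tphi; elim: m => [|m IH].
  have -> : rscale (fun x => g x ^+ 0) phi = phi.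
    by apply/funext => x; rewrite /rscale expr0 rmorph1 mul1r.
  by rewrite expr0 mul1r.
apply: le_trans IH _; rewrite exprSr -mulrA ler_wpM2l ?exprn_ge0 ?ler0c //.
set psi := rscale (fun x => g x ^+ m) phi.
have tpsi : test_fun psi by exact: test_fun_rscale (smoothX m smooth_g) tphi.
have -> : rscale (fun x => g x ^+ m.+1) phi = rscale g psi.
  by rewrite /psi -rscaleM; congr rscale; apply/funext => x; rewrite exprS.
by rewrite {1}(resolvent_step y tpsi).
Qed.

Lemma resolvent_dominated phi y m : test_fun phi ->
  `|A phi y| <= `|A (rscale (fun x => (C * (f x - f x0)) ^+ m) phi) y|.
Proof.
move=> tphi; have tpsi := test_fun_rscale (smoothX m smooth_g) tphi.
have -> : rscale (fun x => (C * (f x - f x0)) ^+ m) phi =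
    (fun x => ((C%:C)%C) ^+ m * rscale (fun x => g x ^+ m) phi x).
  by apply/funext => x; rewrite /rscale exprMn rmorphM rmorphXn mulrA.
rewrite hyperoperatorZ // normrZ ger0_norm ?exprn_ge0 ?ler0c //.
exact: resolvent_pow_le.
Qed.

End Resolvent.
End Hyperoperator.

Theorem lemma5p6 (R : realType) (n : nat) (X : completeNormedModType R[i])
  (A : ('rV[R]_n -> R[i]) -> X -> X) (f : 'rV[R]_n -> R) (bbar : X -> X) :
  hyperoperator A -> smooth f -> bounded_op bbar ->
  (forall (phi : 'rV[R]_n -> R[i]) (y : X), test_fun phi ->
     bbar (A phi y) = A (fun x => ((f x)%:C)%C * phi x) y) ->
  forall x : 'rV[R]_n, hsupport A x -> spectrum bbar (((f x)%:C)%C).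
Proof.
move=> hA sf _ Af x0 x0_supp [S [S_op S_resolvent _]].
have [C C_gt0 S_le] := bounded_op_normP S_op.
pose h x := C * (f x - f x0).
have sh : smooth h := smoothM (smooth_cst C) (smoothD sf (smooth_cst (- f x0))).
have oU : open [set x | `|h x| < expR (-1)].
  apply: (@open_comp _ _ (fun x => `|h x|) [set r | r < expR (-1)]); last exact: open_lt.
  by move=> x _; apply: continuous_comp; [exact: smooth_continuous | exact: (@norm_continuous _ R^o)].
have x0U : `|h x0| < expR (-1) by rewrite /h subrr mulr0 normr0 expR_gt0.
have [phi [tphi phiU [y /eqP[]]]] := x0_supp _ oU x0U.
apply: (hyperoperator_dominated_eq0 hA (D_cvg0_rscale_pow sh tphi _)).
  by move=> z /phiU /ltW.
by move=> m; exact: (resolvent_dominated hA sf (ltW C_gt0) Af S_resolvent S_le y m tphi).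
Qed.
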